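(* Let $\mathbf{PtdCat}$ be the category of pointed categories and $\mathbf{TPtdCat}$ its full subcategory of terminally pointed categories, and let $\iota:\mathbf{TPtdCat}\hookrightarrow\mathbf{PtdCat}$ be the inclusion. Then $\iota$ has a right adjoint $G:\mathbf{PtdCat}\to\mathbf{TPtdCat}$, given on objects by $G(A,\mathcal C)=(1_A,\mathcal C/A)$ and on a morphism $(F,\alpha):(A,\mathcal C)\to(B,\mathcal D)$ by $G(F,\alpha)=(\Sigma_\alpha\circ F/A,\ \alpha)$. More precisely, for every pointed category $(A,\mathcal C)$ the morphism $(\Sigma_A,1_A):(1_A,\mathcal C/A)\to(A,\mathcal C)$ is universal from $\iota$ to $(A,\mathcal C)$: for every terminally pointed category $(1,\mathcal D)$ and every morphism $(F,\alpha):(1,\mathcal D)\to(A,\mathcal C)$ there is a unique morphism $(\overline F,\overline\alpha):(1,\mathcal D)\to(1_A,\mathcal C/A)$ with $(\Sigma_A,1_A)\circ(\overline F,\overline\alpha)=(F,\alpha)$.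
   Context: A pointed category is a pair $(A,\mathcal C)$ with $\mathcal C$ a non-empty category and $A$ an object of $\mathcal C$. A morphism of pointed categories $(A,\mathcal C)\to(B,\mathcal D)$ is a pair $(F,\alpha)$ with $F:\mathcal C\to\mathcal D$ a functor and $\alpha:FA\to B$ a morphism of $\mathcal D$. Composition: $(G,\beta)\circ(F,\alpha)=(GF,\ \beta\circ G\alpha)$; identities are $(1_{\mathcal C},1_A)$. This gives the category $\mathbf{PtdCat}$. A terminally pointed category is a pointed category $(1,\mathcal C)$ where $1$ is a chosen terminal object of $\mathcal C$; these span the full subcategory $\mathbf{TPtdCat}$. For an object $A$ of $\mathcal C$, $\mathcal C/A$ is the slice category (objects: morphisms $x:X\to A$; morphisms $g:(x:X\to A)\to(y:Y\to A)$ with $yg=x$), with terminal object $1_A$. $\Sigma_A:\mathcal C/A\to\mathcal C$ is the forgetful functor. For $f:A\to B$ in $\mathcal C$, $\Sigma_f:\mathcal C/A\to\mathcal C/B$ sends $x$ to $fx$ and $g$ to $g$. For a functor $F:\mathcal C\to\mathcal D$, the slice functor $F/A:\mathcal C/A\to\mathcal D/FA$ sends $x:X\to A$ to $Fx$ and $g$ to $Fg$. *)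

From Stdlib Require Import ProofIrrelevance.
Set Implicit Arguments.
Unset Strict Implicit.

(* A category; composition is written  comp g f = g o f  for f : X -> Y, g : Y -> Z. *)
Record Category := {
  Obj :> Type;
  hom : Obj -> Obj -> Type;
  id : forall X, hom X X;
  comp : forall X Y Z, hom Y Z -> hom X Y -> hom X Z;
  comp_id_l : forall X Y (f : hom X Y), comp (id Y) f = f;
  comp_id_r : forall X Y (f : hom X Y), comp f (id X) = f;
  comp_assoc : forall X Y Z W (f : hom X Y) (g : hom Y Z) (h : hom Z W),
      comp h (comp g f) = comp (comp h g) f
}.
Arguments id {c} X.
Arguments comp {c X Y Z} g f.
Arguments hom {c} X Y.

Record Functor (C D : Category) := {
  fobj :> C -> D;
  fmap : forall X Y : C, hom X Y -> hom (fobj X) (fobj Y);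
  fmap_id : forall X : C, fmap (id X) = id (fobj X);
  fmap_comp : forall (X Y Z : C) (f : hom X Y) (g : hom Y Z),
      fmap (comp g f) = comp (fmap g) (fmap f)
}.
Arguments fmap {C D} f0 {X Y} f.

Definition fcomp_fun (C D E : Category) (G : Functor D E) (F : Functor C D) :
  Functor C E.
Proof.
  refine {| fobj := fun X => G (F X);
            fmap := fun X Y f => fmap G (fmap F f) |}.
  - intros X. rewrite (fmap_id F), (fmap_id G). reflexivity.
  - intros X Y Z f g. rewrite (fmap_comp F), (fmap_comp G). reflexivity.
Defined.

Definition is_terminal (C : Category) (t : C) : Prop :=
  forall X : C, exists f : hom X t, forall g : hom X t, g = f.

(* Morphisms of pointed categories (F, alpha) : (A, C) -> (B, D). *)
Record PMor (C D : Category) (A : C) (B : D) := {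
  pF : Functor C D;
  palpha : hom (pF A) B
}.

Definition pcomp (C D E : Category) (A : C) (B : D) (X : E)
  (m2 : PMor B X) (m1 : PMor A B) : PMor A X :=
  {| pF := fcomp_fun (pF m2) (pF m1);
     palpha := comp (palpha m2) (fmap (pF m2) (palpha m1)) |}.

Section Slice.
Variables (C : Category) (A : C).

Definition sobj := { X : C & hom X A }.
Definition shom (x y : sobj) :=
  { g : hom (projT1 x) (projT1 y) | comp (projT2 y) g = projT2 x }.

Lemma shom_eq (x y : sobj) (g h : shom x y) : proj1_sig g = proj1_sig h -> g = h.
Proof.
  destruct g as [g pg], h as [h ph]; simpl; intros ->.
  f_equal; apply proof_irrelevance.
Qed.

Definition sid (x : sobj) : shom x x.
Proof. exists (id (projT1 x)). apply comp_id_r. Defined.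

Definition scomp (x y z : sobj) (g : shom y z) (f : shom x y) : shom x z.
Proof.
  exists (comp (proj1_sig g) (proj1_sig f)).
  rewrite comp_assoc, (proj2_sig g). exact (proj2_sig f).
Defined.

Definition slice : Category.
Proof.
  refine {| Obj := sobj; hom := shom; id := sid; comp := scomp |}.
  - intros; apply shom_eq; simpl; apply comp_id_l.
  - intros; apply shom_eq; simpl; apply comp_id_r.
  - intros; apply shom_eq; simpl; apply comp_assoc.
Defined.

Definition slice_top : slice := existT (fun X : C => hom X A) A (id A).

Definition Sigma_fun : Functor slice C.
Proof.
  refine {| fobj := fun x : slice => projT1 x;
            fmap := fun x y (g : hom x y) => proj1_sig g |}.
  - reflexivity.
  - reflexivity.
Defined.

Definition Sigma_mor : @PMor slice C slice_top A :=
  @Build_PMor slice C slice_top A Sigma_fun (id A).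
End Slice.

From Stdlib Require Import ProofIrrelevance FunctionalExtensionality IndefiniteDescription.
Set Implicit Arguments.

(** A morphism [(F, a) : (1, D) -> (A, C)] lifts to the slice by sending [X] to
    [a o F(!_X) : F X -> A]; the lift lies over [(F, a)] along [(Sigma_A, 1_A)].
    Conversely a functor [G : D -> C/A] is determined by its underlying functor
    [Sigma_A G] and one structure arrow: since [1_A] is terminal in [C/A], the
    structure arrow of [G X] is the underlying arrow of the composite
    [G X -> G 1 -> 1_A], so [G] is the lift of its image.  Hence postcomposition
    with [(Sigma_A, 1_A)] is a bijection, with the lift as inverse. *)

Definition transport_hom {C : Category} {X X' Y Y' : C}
  (eX : X = X') (eY : Y = Y') (f : hom X Y) : hom X' Y' :=
  match eX in _ = X' return hom X' Y' with
  | eq_refl => match eY in _ = Y' return hom X Y' with eq_refl => f end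
  end.

Lemma functor_eq (C D : Category) (F G : Functor C D) (e : forall X, F X = G X) :
  (forall X Y (f : hom X Y), transport_hom (e X) (e Y) (fmap F f) = fmap G f) ->
  F = G.
Proof.
  destruct F as [fo fm fi fc], G as [go gm gi gc]; simpl in *; intros hm.
  assert (eo : fo = go) by (apply functional_extensionality; exact e).
  subst go.
  assert (em : fm = gm).
  { apply functional_extensionality_dep; intros X.
    apply functional_extensionality_dep; intros Y.
    apply functional_extensionality; intros f.
    rewrite <- hm, (proof_irrelevance _ (e X) eq_refl),
      (proof_irrelevance _ (e Y) eq_refl).
    reflexivity. }
  subst gm; f_equal; apply proof_irrelevance.
Qed.

Lemma pmor_eq (C D : Category) (A : C) (B : D) {m1 m2 : PMor A B}
  (eF : pF m1 = pF m2) (eA : pF m1 A = pF m2 A) :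
  transport_hom eA eq_refl (palpha m1) = palpha m2 -> m1 = m2.
Proof.
  destruct m1 as [F1 a1], m2 as [F2 a2]; simpl in *; subst F2.
  rewrite (proof_irrelevance _ eA eq_refl); simpl; intros ->.
  reflexivity.
Qed.

Lemma proj1_sig_transport_hom (C : Category) (A : C) (x x' y y' : slice A)
  (ex : x = x') (ey : y = y') (g : hom x y) :
  proj1_sig (transport_hom ex ey g) =
  transport_hom (f_equal (@projT1 _ _) ex) (f_equal (@projT1 _ _) ey) (proj1_sig g).
Proof. destruct ex, ey; reflexivity. Qed.

Section Terminal.
Variables (D : Category) (one : D) (Hone : is_terminal one).

Definition to_terminal (X : D) : hom X one :=
  proj1_sig (constructive_indefinite_description _ (Hone X)).

Lemma to_terminal_unique {X : D} (g : hom X one) : g = to_terminal X.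
Proof.
  unfold to_terminal.
  destruct (constructive_indefinite_description _ (Hone X)) as [u hu]; simpl.
  apply hu.
Qed.

End Terminal.

Section SliceTop.
Variables (C : Category) (A : C).

Lemma proj1_sig_to_slice_top (x : slice A) (g : hom x (slice_top A)) :
  proj1_sig g = projT2 x.
Proof. rewrite <- (proj2_sig g); symmetry; apply comp_id_l. Qed.

Lemma to_slice_top_unique (x : slice A) (g h : hom x (slice_top A)) : g = h.
Proof. apply shom_eq; rewrite !proj1_sig_to_slice_top; reflexivity. Qed.

Lemma slice_top_terminal : is_terminal (slice_top A).
Proof.
  intros x.
  exists (exist _ (projT2 x) (comp_id_l (projT2 x)) : hom x (slice_top A)).
  intros h; apply to_slice_top_unique.
Qed.

End SliceTop.

Section SliceLift.
Variables (C D : Category) (A : C) (one : D) (Hone : is_terminal one).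

Let t := to_terminal Hone.

Lemma slice_lift_fmap_subproof (m : PMor one A) {X Y : D} (f : hom X Y) :
  comp (comp (palpha m) (fmap (pF m) (t Y))) (fmap (pF m) f) =
  comp (palpha m) (fmap (pF m) (t X)).
Proof.
  rewrite <- comp_assoc, <- fmap_comp.
  rewrite (to_terminal_unique Hone (comp (t Y) f)).
  reflexivity.
Qed.

Definition slice_lift_fun (m : PMor one A) : Functor D (slice A).
Proof.
  refine {| fobj := fun X =>
              existT (fun Z : C => hom Z A) (pF m X)
                (comp (palpha m) (fmap (pF m) (t X))) : slice A;
            fmap := fun X Y f => exist _ (fmap (pF m) f) (slice_lift_fmap_subproof m f) |}.
  - intros X; apply shom_eq; apply fmap_id.
  - intros X Y Z f g; apply shom_eq; apply fmap_comp.
Defined.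

Definition slice_lift_alpha (m : PMor one A) :
  hom (slice_lift_fun m one) (slice_top A).
Proof.
  exists (palpha m); simpl; unfold t.
  rewrite <- (to_terminal_unique Hone (id one)), fmap_id, comp_id_l, comp_id_r.
  reflexivity.
Defined.

Definition slice_lift (m : PMor one A) : PMor one (slice_top A) :=
  {| pF := slice_lift_fun m; palpha := slice_lift_alpha m |}.

Lemma pcomp_Sigma_slice_lift (m : PMor one A) :
  pcomp (Sigma_mor A) (slice_lift m) = m.
Proof.
  unshelve eapply pmor_eq; [exact eq_refl | | apply comp_id_l].
  unshelve eapply functor_eq; reflexivity.
Qed.

Lemma slice_lift_pcomp_Sigma (mbar : PMor one (slice_top A)) :
  slice_lift (pcomp (Sigma_mor A) mbar) = mbar.
Proof.
  set (G := pF mbar).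
  assert (eobj : forall X, slice_lift_fun (pcomp (Sigma_mor A) mbar) X = G X).
  { intros X; rewrite (sigT_eta (G X)); simpl; f_equal.
    rewrite comp_id_l.
    exact (proj1_sig_to_slice_top (comp (palpha mbar) (fmap G (t X)))). }
  unshelve eapply pmor_eq; [exact (eobj one) | | apply to_slice_top_unique].
  apply functor_eq with (e := eobj); intros X Y f.
  apply shom_eq; rewrite proj1_sig_transport_hom.
  rewrite (proof_irrelevance _ (f_equal (@projT1 _ _) (eobj X)) eq_refl),
    (proof_irrelevance _ (f_equal (@projT1 _ _) (eobj Y)) eq_refl).
  reflexivity.
Qed.

End SliceLift.

Theorem mainTheorem1 :
  forall (C : Category) (A : C),
    is_terminal (slice_top A) /\
    forall (D : Category) (one : D), is_terminal one ->
    forall m : PMor one A,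
      exists! mbar : PMor one (slice_top A), pcomp (Sigma_mor A) mbar = m.
Proof.
  intros C A; split.
  - apply slice_top_terminal.
  - intros D one Hone m.
    exists (slice_lift Hone m); split.
    + apply pcomp_Sigma_slice_lift.
    + intros mbar <-; apply slice_lift_pcomp_Sigma.
Qed.
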